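(* Let $h(n)$ be defined by $h(0)=h(1)=h(2)=h(3)=1$, $h(4)=3$ and $h(n)=h(n-2)+2h(n-3)+2h(n-4)$ for $n\ge5$ (so that, for $n\ge3$, $h(n)$ is the number of saturated stem-loop structures on $[1,n]$). Then for $n\ge1$, $h(n)=[z^n]\dfrac{z}{1-z-2z^3}$, and as $n\to\infty$, $$h(n)\sim \frac{1}{1+6a^2}\,a^{-n}\approx 0.323954\cdot 1.69562^n,$$ where $a\approx 0.5897545$ is the unique real root of $1-z-2z^3$.
   Context: A secondary structure on $[1,n]$ (with $\theta=1$) is a set of pairs $(i,j)$, $1\le i<j\le n$, with no crossing pairs ($i<k<j<\ell$), each position in at most one pair, and $j-i>1$ for each pair. It is saturated if no further pair can be added while remaining a secondary structure. A stem-loop is a secondary structure $S$ having a unique pair $(i_0,j_0)\in S$ such that every other $(i,j)\in S$ satisfies $i<i_0<j_0<j$. *)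

From Stdlib Require Import Reals.
Open Scope R_scope.

Fixpoint h (n : nat) : nat :=
  match n with
  | S (S ((S ((S ((S m) as k1)) as k2)) as k3)) =>
      (h k3 + 2 * h k2 + 2 * h k1)%nat
  | 4%nat => 3%nat
  | _ => 1%nat
  end.

Definition ps_mul (f g : nat -> R) : nat -> R :=
  fun n => sum_f_R0 (fun k => f k * g (n - k)%nat) n.

Definition den_poly (n : nat) : R :=
  match n with
  | 0%nat => 1
  | 1%nat => -1
  | 3%nat => -2
  | _ => 0
  end.

Definition num_poly (n : nat) : R :=
  match n with
  | 1%nat => 1
  | _ => 0
  end.

(* G is the power series expansion of z / (1 - z - 2 z^3), i.e. the
   (unique) formal power series with (1 - z - 2 z^3) * G = z. *)
Definition is_series_of_quot (G : nat -> R) : Prop :=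
  forall n, ps_mul den_poly G n = num_poly n.

(* Writing out the Cauchy product, a sequence G is the
   expansion of z/(1 - z - 2z^3) iff G 0 = 0, G 1 = G 2 = 1 and
   G (n+3) = G (n+2) + 2 G n.  The defining four-term recurrence of h implies
   the three-term one h (n+4) = h (n+3) + 2 h (n+1), so the sequence equal to
   h off 0 and to 0 at 0 is such a G; and any two such G agree.

   The root.  x |-> 1 - x - 2x^3 is strictly decreasing and continuous, which
   gives existence (IVT), uniqueness, and the numerical bounds (sign checks at
   rational points).

   For a root a, put u n = G n * a^n and c = 1/(1+6a^2).  Then
   u (n+3) = a u (n+2) + q u n with q := 2a^3 = 1 - a, whose characteristic
   polynomial is (x - 1)(x^2 + q x + q); the quadratic factor has non-real
   roots of modulus sqrt q < 1.  Concretely, u (n+2) + q u (n+1) + q u n is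
   conserved, so d n = u n - c satisfies d (n+2) + q d (n+1) + q d n = 0, and a
   general lemma shows such damped second-order recurrences tend to 0: the
   positive definite form d(n+1)^2 + p d(n+1) d(n) + q d(n)^2 is multiplied
   by q at each step. *)

From Stdlib Require Import Reals Lra Lia.
Open Scope R_scope.

Definition cubic (x : R) : R := 1 - x - 2 * x ^ 3.

(* The difference of two values factors through a positive quadratic. *)
Lemma cubic_decreasing x y : x < y -> cubic y < cubic x.
Proof.
  intros Hxy.
  assert (Hsq : 0 <= x ^ 2 + x * y + y ^ 2) by nra.
  assert (E : cubic x - cubic y = (y - x) * (1 + 2 * (x ^ 2 + x * y + y ^ 2)))
    by (unfold cubic; ring).
  nra.
Qed.

Lemma root_between a l u :
  cubic a = 0 -> 0 < cubic l -> cubic u < 0 -> l < a < u.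
Proof.
  intros Ha Hl Hu; split.
  - destruct (Rtotal_order l a) as [Hla | [Hla | Hla]]; [exact Hla | subst; lra |].
    pose proof (cubic_decreasing a l Hla); lra.
  - destruct (Rtotal_order a u) as [Hau | [Hau | Hau]]; [exact Hau | subst; lra |].
    pose proof (cubic_decreasing u a Hau); lra.
Qed.

(* Existence by the intermediate value theorem on [0, 1]; uniqueness by
   strict monotonicity. *)
Lemma cubic_root_unique : exists! a : R, 1 - a - 2 * a ^ 3 = 0.
Proof.
  assert (Hcont : continuity (fun x => - cubic x)) by (unfold cubic; reg).
  destruct (IVT _ 0 1 Hcont) as [a [_ Ha]]; try (unfold cubic; simpl; lra).
  exists a; split; [unfold cubic in Ha; lra |].
  intros b Hb.
  destruct (Rtotal_order a b) as [Hab | [Hab | Hab]]; [| exact Hab |].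
  - pose proof (cubic_decreasing a b Hab); unfold cubic in *; lra.
  - pose proof (cubic_decreasing b a Hab); unfold cubic in *; lra.
Qed.

(* The numerical values: a is pinned to within 10^-8 by two sign checks. *)
Lemma root_numerics a : cubic a = 0 ->
  Rabs (a - 5897545 / 10000000) < 1 / 10000000 /\
  Rabs (1 / (1 + 6 * a ^ 2) - 323954 / 1000000) < 1 / 1000000 /\
  Rabs (/ a - 169562 / 100000) < 1 / 1000000.
Proof.
  intros Ha.
  destruct (root_between a (58975451 / 100000000) (58975452 / 100000000) Ha)
    as [Hlo Hhi]; try (unfold cubic; lra).
  assert (HD : 0 < 1 + 6 * a ^ 2) by nra.
  assert (Hc : 1 / (1 + 6 * a ^ 2) * (1 + 6 * a ^ 2) = 1) by (field; lra).
  assert (Hi : / a * a = 1) by (field; lra).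
  set (c := 1 / (1 + 6 * a ^ 2)) in *. set (D := 1 + 6 * a ^ 2) in *.
  assert (1 < (323954 / 1000000 + 1 / 1000000) * D) by (unfold D; nra).
  assert ((323954 / 1000000 - 1 / 1000000) * D < 1) by (unfold D; nra).
  set (b := / a) in *.
  split; [| split]; apply Rabs_def1; nra.
Qed.

Lemma h_rec n : h (S (S (S (S n)))) = (h (S (S (S n))) + 2 * h (S n))%nat.
Proof.
  induction n as [| n IH]; [reflexivity |].
  change (h (S (S (S (S (S n))))))
    with (h (S (S (S n))) + 2 * h (S (S n)) + 2 * h (S n))%nat.
  rewrite IH; lia.
Qed.

Definition den_recurrence (g : nat -> R) : Prop :=
  forall n, g (S (S (S n))) = g (S (S n)) + 2 * g n.

Lemma den_recurrence_unique f g :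
  den_recurrence f -> den_recurrence g ->
  f 0%nat = g 0%nat -> f 1%nat = g 1%nat -> f 2%nat = g 2%nat ->
  forall n, f n = g n.
Proof.
  intros Hf Hg H0 H1 H2.
  assert (Htriple : forall n, f n = g n /\ f (S n) = g (S n) /\ f (S (S n)) = g (S (S n))).
  { induction n as [| n [E0 [E1 E2]]]; [auto |].
    repeat split; auto. rewrite Hf, Hg; lra. }
  intros n; apply Htriple.
Qed.

Definition hseries (n : nat) : R := match n with O => 0 | _ => INR (h n) end.

(* Off 0, this is the collapsed recurrence of h; at 0 it reads 1 = 1 + 2*0. *)
Lemma hseries_rec : den_recurrence hseries.
Proof.
  intros [| n]; [simpl; lra |].
  unfold hseries. rewrite h_rec, plus_INR, mult_INR. simpl (INR 2). ring.
Qed.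

(* Only the first four coefficients of 1 - z - 2z^3 enter a convolution. *)
Lemma sum_trunc (f : nat -> R) j : (forall k, (4 <= k)%nat -> f k = 0) ->
  sum_f_R0 f (3 + j) = sum_f_R0 f 3.
Proof.
  intros Hf; induction j as [| j IH]; [reflexivity |].
  replace (3 + S j)%nat with (S (3 + j)) by lia.
  rewrite tech5, IH, (Hf (S (3 + j))) by lia. ring.
Qed.

Lemma ps_mul_den_high G n :
  ps_mul den_poly G (S (S (S n))) = G (S (S (S n))) - G (S (S n)) - 2 * G n.
Proof.
  unfold ps_mul. replace (S (S (S n))) with (3 + n)%nat by lia.
  rewrite sum_trunc.
  - simpl sum_f_R0. unfold den_poly. rewrite Nat.sub_0_r. simpl. ring.
  - intros [| [| [| [| k]]]] Hk; try lia. simpl. ring.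
Qed.

Lemma is_series_of_quot_iff G : is_series_of_quot G <->
  G 0%nat = 0 /\ G 1%nat = 1 /\ G 2%nat = 1 /\ den_recurrence G.
Proof.
  split.
  - intros HG.
    pose proof (HG 0%nat) as E0. pose proof (HG 1%nat) as E1. pose proof (HG 2%nat) as E2.
    unfold ps_mul in E0, E1, E2. simpl in E0, E1, E2.
    repeat split; try lra.
    intros n. pose proof (HG (S (S (S n)))) as E. rewrite ps_mul_den_high in E.
    simpl in E. lra.
  - intros [E0 [E1 [E2 Hrec]]] [| [| [| n]]];
      try (unfold ps_mul; simpl; lra).
    rewrite ps_mul_den_high, Hrec. simpl. ring.
Qed.

Lemma hseries_is_series : is_series_of_quot hseries.
Proof.
  apply is_series_of_quot_iff. repeat split; try (simpl; lra).
  exact hseries_rec.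
Qed.

Lemma series_coeff_h G : is_series_of_quot G ->
  forall n, (1 <= n)%nat -> INR (h n) = G n.
Proof.
  intros HG n Hn.
  destruct (proj1 (is_series_of_quot_iff G) HG) as [E0 [E1 [E2 Hrec]]].
  rewrite (den_recurrence_unique G hseries Hrec hseries_rec) by (simpl; lra).
  destruct n; [lia | reflexivity].
Qed.

(* A damped second-order linear recurrence, x^2 + p x + q with p^2 < 4q and
   q < 1 (non-real characteristic roots of modulus sqrt q < 1), tends to 0. *)
Section DampedRecurrence.

Variables (p q : R) (d : nat -> R).
Hypothesis Hdisc : p ^ 2 < 4 * q.
Hypothesis Hq1 : q < 1.
Hypothesis Hrec : forall n, d (S (S n)) + p * d (S n) + q * d n = 0.

Let V (n : nat) : R := d (S n) ^ 2 + p * d (S n) * d n + q * d n ^ 2.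

Lemma damped_form_geometric n : V n = V 0%nat * q ^ n.
Proof.
  induction n as [| n IH]; [simpl; ring |].
  assert (Estep : V (S n) = q * V n).
  { unfold V. replace (d (S (S n))) with (- p * d (S n) - q * d n)
      by (pose proof (Hrec n); lra).
    ring. }
  rewrite Estep, IH. simpl. ring.
Qed.

(* Completing the square: the form dominates a positive multiple of d n ^ 2. *)
Lemma damped_form_lower n : (q - p ^ 2 / 4) * d n ^ 2 <= V n.
Proof.
  assert (E : V n = (d (S n) + p / 2 * d n) ^ 2 + (q - p ^ 2 / 4) * d n ^ 2)
    by (unfold V; field).
  pose proof (pow2_ge_0 (d (S n) + p / 2 * d n)); lra.
Qed.

(* Hence d n ^ 2 <= V 0 q^n / (q - p^2/4), which tends to 0. *)
Lemma damped_recurrence_cv0 : Un_cv d 0.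
Proof.
  intros eps Heps.
  set (k := q - p ^ 2 / 4).
  assert (Hk : 0 < k) by (unfold k; lra).
  assert (Hq0 : 0 <= q) by nra.
  assert (HV0 : 0 <= V 0%nat) by (pose proof (damped_form_lower 0); nra).
  assert (Hq : Rabs q < 1) by (rewrite Rabs_pos_eq; lra).
  destruct (pow_lt_1_zero q Hq (k * eps ^ 2 / (V 0%nat + 1))) as [N HN].
  { apply Rdiv_lt_0_compat; [apply Rmult_lt_0_compat; [lra | apply pow_lt] |]; lra. }
  exists N; intros n Hn.
  specialize (HN n Hn). rewrite Rabs_pos_eq in HN by (apply pow_le; lra).
  assert (Hsmall : d n ^ 2 < eps ^ 2).
  { assert (Hbound : V 0%nat * q ^ n < k * eps ^ 2).
    { apply (Rmult_lt_compat_l (V 0%nat + 1)) in HN; [| lra].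
      replace ((V 0%nat + 1) * (k * eps ^ 2 / (V 0%nat + 1))) with (k * eps ^ 2)
        in HN by (field; lra).
      pose proof (pow_le q n Hq0); nra. }
    pose proof (damped_form_lower n) as Hlow.
    rewrite damped_form_geometric in Hlow; fold k in Hlow.
    nra. }
  unfold R_dist. rewrite Rminus_0_r, <- (Rabs_pos_eq eps) by lra.
  apply Rsqr_lt_abs_0. unfold Rsqr. simpl in Hsmall. lra.
Qed.

End DampedRecurrence.

Section Asymptotics.

Variable a : R.
Hypothesis Ha : cubic a = 0.

(* Signs at 0 and 1. *)
Lemma root_in_unit_interval : 0 < a < 1.
Proof. apply root_between; auto; unfold cubic; simpl; lra. Qed.

Let c : R := 1 / (1 + 6 * a ^ 2).

Let u (n : nat) : R := hseries n * a ^ n.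

(* With q = 2a^3 = 1 - a, this quantity is conserved by the recurrence: its
   increment is a multiple of cubic a. *)
Let I (n : nat) : R :=
  u (S (S n)) + 2 * a ^ 3 * u (S n) + 2 * a ^ 3 * u n.

Lemma invariant_conserved n : I n = a.
Proof.
  unfold cubic in Ha.
  induction n as [| n IH].
  - unfold I, u.
    transitivity (a - a * (1 - a - 2 * a ^ 3)); [simpl; ring | rewrite Ha; ring].
  - rewrite <- IH. unfold I, u. rewrite hseries_rec.
    transitivity (hseries (S (S n)) * a ^ S (S n) + 2 * a ^ 3 * (hseries (S n) * a ^ S n)
                  + 2 * a ^ 3 * (hseries n * a ^ n)
                  - hseries (S (S n)) * a ^ S (S n) * (1 - a - 2 * a ^ 3)).
    + generalize (hseries (S (S n))) (hseries (S n)) (hseries n); intros; simpl; ring.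
    + rewrite Ha; ring.
Qed.

(* c is the fixed point of the invariant, c (1 + 2q) = a, so u - c satisfies
   the damped recurrence with p = q = 2a^3 = 1 - a in (0, 1). *)
Lemma scaled_series_cv : Un_cv u c.
Proof.
  destruct root_in_unit_interval as [Ha0 Ha1].
  assert (Hc : c * (1 + 4 * a ^ 3) = a).
  { replace (1 + 4 * a ^ 3) with (a * (1 + 6 * a ^ 2)) by (unfold cubic in Ha; nra).
    unfold c; field; nra. }
  assert (Hdamped : forall n, (u (S (S n)) - c) + 2 * a ^ 3 * (u (S n) - c)
                              + 2 * a ^ 3 * (u n - c) = 0).
  { intros n. pose proof (invariant_conserved n) as E. unfold I in E. nra. }
  assert (Hd0 : Un_cv (fun n => u n - c) 0).
  { apply (damped_recurrence_cv0 (2 * a ^ 3) (2 * a ^ 3)); auto;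
      unfold cubic in Ha; nra. }
  intros eps Heps. destruct (Hd0 eps Heps) as [N HN].
  exists N; intros n Hn. specialize (HN n Hn). unfold R_dist in *.
  rewrite Rminus_0_r in HN. exact HN.
Qed.

(* For n >= 1, h n / (c a^-n) = u n / c. *)
Lemma h_asymptotics :
  Un_cv (fun n => INR (h n) / ((1 / (1 + 6 * a ^ 2)) * / a ^ n)) 1.
Proof.
  destruct root_in_unit_interval as [Ha0 Ha1].
  assert (Hc : 0 < c) by (unfold c; apply Rdiv_lt_0_compat; nra).
  apply (CV_shift _ 1).
  assert (Hconst : Un_cv (fun _ => / c) (/ c)).
  { intros eps Heps; exists 0%nat; intros; rewrite R_dist_eq; lra. }
  pose proof (CV_mult _ _ _ _ (CV_shift' u 1 c scaled_series_cv) Hconst) as Hcv.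
  rewrite Rinv_r in Hcv by lra.
  refine (Un_cv_ext _ _ _ 1 Hcv). intros n.
  assert (Hpow : 0 < a ^ (n + 1)) by (apply pow_lt; lra).
  unfold u. replace (n + 1)%nat with (S n) in * by lia.
  fold c. change (hseries (S n)) with (INR (h (S n))). field; lra.
Qed.

End Asymptotics.

Theorem mainTheorem8 :
  (exists G : nat -> R, is_series_of_quot G) /\
  (forall G : nat -> R, is_series_of_quot G ->
     forall n : nat, (1 <= n)%nat -> INR (h n) = G n) /\
  (exists! a : R, 1 - a - 2 * a ^ 3 = 0) /\
  (forall a : R, 1 - a - 2 * a ^ 3 = 0 ->
     Un_cv (fun n => INR (h n) / ((1 / (1 + 6 * a ^ 2)) * / a ^ n)) 1 /\
     Rabs (a - 5897545 / 10000000) < 1 / 10000000 /\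
     Rabs (1 / (1 + 6 * a ^ 2) - 323954 / 1000000) < 1 / 1000000 /\
     Rabs (/ a - 169562 / 100000) < 1 / 1000000).
Proof.
  split; [exists hseries; exact hseries_is_series |].
  split; [exact series_coeff_h |].
  split; [exact cubic_root_unique |].
  intros a Ha.
  split; [exact (h_asymptotics a Ha) | exact (root_numerics a Ha)].
Qed.
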